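(* Let $p$ and $q$ be relatively prime positive integers, and let $\omega=e^{i\pi p/q}$ with $\omega\ne1$. Then $$\gamma(\omega)+\frac{\log(1-\omega)}{\omega}=\sum_{j=1}^{q}\omega^{j-1}E_{j,p,q}=\sum_{j=1}^{2q}\omega^{j-1}\log\frac{\Gamma\!\left(\frac{j+1}{2q}\right)}{\Gamma\!\left(\frac{j}{2q}\right)},$$ where $$E_{j,p,q}=\begin{cases}\log\dfrac{\Gamma\left(\frac{j+1}{q}\right)}{\Gamma\left(\frac jq\right)} & \text{if } p \text{ is even},\\[2ex] \log\dfrac{\Gamma\left(\frac{j+1}{2q}\right)\Gamma\left(\frac{j+q}{2q}\right)}{\Gamma\left(\frac{j}{2q}\right)\Gamma\left(\frac{j+q+1}{2q}\right)} & \text{if } p \text{ is odd}.\end{cases}$$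
   Context: $\gamma(z)=\sum_{n=1}^{\infty} z^{n-1}\left(\frac{1}{n}-\log\frac{n+1}{n}\right)$ for $|z|\le1$. $\log$ is the principal branch ($-\pi<\mathrm{Arg}\le\pi$), and $\Gamma$ is Euler's gamma function. *)

From Stdlib Require Import Reals.
From Coquelicot Require Import Coquelicot.
Open Scope R_scope.

Definition Gamma (x : R) : R :=
  RInt_gen (fun t => Rpower t (x - 1) * exp (- t)) (at_right 0) (Rbar_locally p_infty).

Definition Arg (z : C) : R :=
  let x := fst z in let y := snd z in
  if Rlt_dec 0 x then atan (y / x)
  else if Rlt_dec x 0 then
         (if Rle_dec 0 y then atan (y / x) + PI else atan (y / x) - PI)
  else if Rlt_dec 0 y then PI / 2
  else if Rlt_dec y 0 then - (PI / 2)
  else 0.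

Definition Clog (z : C) : C := (ln (Cmod z), Arg z).

Definition Cexp (z : C) : C := (exp (fst z) * cos (snd z), exp (fst z) * sin (snd z)).

(* n-th term (0-indexed, n = m - 1) of gamma(z) = sum_{m>=1} z^(m-1) (1/m - log((m+1)/m)). *)
Definition gamma_term (z : C) (n : nat) : C :=
  Cmult (pow_n z n) (RtoC (1 / INR (S n) - ln (INR (S (S n)) / INR (S n)))).

Definition E_jpq (j p q : nat) : R :=
  if Nat.even p then
    ln (Gamma (INR (j + 1) / INR q) / Gamma (INR j / INR q))
  else
    ln (Gamma (INR (j + 1) / INR (2 * q)) * Gamma (INR (j + q) / INR (2 * q))
        / (Gamma (INR j / INR (2 * q)) * Gamma (INR (j + q + 1) / INR (2 * q)))).

(** Write [w = e^{i th}] with [th = PI p / q], so that [w^(2q) = 1].  The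
    coefficient of [w^k] in [gamma (w)] is [1/(k+1) - ln ((k+2)/(k+1))].  The
    first part gives the logarithmic series, whose sum [- log (1 - w) / w] is
    obtained by integrating the geometric series termwise over [[0, 1]], with
    error [O(1/N)] when [N] is a multiple of the period.  For the second part,
    let [c] be an [M]-periodic sequence of mean zero (the real or imaginary
    part of [w^k]); Gauss's product formula
    [lnGamma x = lnGamma (n+1) + x ln n - sum_(i<=n) ln (x+i) + O(1/n)],
    taken at [x = (j+1)/M] and [x = (j+2)/M], turns the block sums of
    [c_k ln ((k+2)/(k+1))] into [- sum_j c_j (lnGamma ((j+2)/M) - lnGamma ((j+1)/M))].
    The product formula follows from [Gamma (x+1) = x Gamma x] and the
    log-convexity of [Gamma], both derived from the integral.  The sums over
    [j <= q] and [j <= 2q] agree: for [p] odd, [w^q = -1] folds the longer sum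
    onto the shorter one; for [p] even, [w^q = 1] and both are limits of the
    same block sums, taken with periods [q] and [2q]. *)

From Stdlib Require Import Reals Lra Lia Classical.
From Coquelicot Require Import Coquelicot.
Open Scope R_scope.

(* Sum over [k < N]; unlike [sum_n], it has an empty case. *)
Fixpoint sum_lt (f : nat -> R) (N : nat) : R :=
  match N with O => 0 | S N' => sum_lt f N' + f N' end.

Lemma sum_lt_ext f g N :
  (forall k, (k < N)%nat -> f k = g k) -> sum_lt f N = sum_lt g N.
Proof.
  induction N as [|N IH]; intros H; simpl; [reflexivity|].
  rewrite IH by (intros; apply H; lia). rewrite H by lia. reflexivity.
Qed.

Lemma sum_lt_plus f g N : sum_lt (fun k => f k + g k) N = sum_lt f N + sum_lt g N.
Proof. induction N; simpl; [ring | rewrite IHN; ring]. Qed.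

Lemma sum_lt_minus f g N : sum_lt (fun k => f k - g k) N = sum_lt f N - sum_lt g N.
Proof. induction N; simpl; [ring | rewrite IHN; ring]. Qed.

Lemma sum_lt_scal a f N : sum_lt (fun k => a * f k) N = a * sum_lt f N.
Proof. induction N; simpl; [ring | rewrite IHN; ring]. Qed.

Lemma sum_lt_zero N : sum_lt (fun _ => 0) N = 0.
Proof. induction N; simpl; [ring | rewrite IHN; ring]. Qed.

Lemma sum_lt_add f a b :
  sum_lt f (a + b) = sum_lt f a + sum_lt (fun k => f (a + k)%nat) b.
Proof.
  induction b as [|b IH]; simpl.
  - rewrite Nat.add_0_r. ring.
  - rewrite Nat.add_succ_r. simpl. rewrite IH. ring.
Qed.

Lemma Rabs_sum_lt_le f N B :
  (forall k, (k < N)%nat -> Rabs (f k) <= B) -> Rabs (sum_lt f N) <= INR N * B.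
Proof.
  induction N as [|N IH]; intros H; simpl sum_lt.
  - rewrite Rabs_R0. simpl. lra.
  - eapply Rle_trans; [apply Rabs_triang|].
    rewrite S_INR. specialize (IH ltac:(intros; apply H; lia)).
    specialize (H N ltac:(lia)). lra.
Qed.

Lemma sum_n_C (a : nat -> C) N :
  sum_n a N = (sum_lt (fun k => fst (a k)) (S N), sum_lt (fun k => snd (a k)) (S N)).
Proof.
  induction N as [|N IH].
  - rewrite sum_O. simpl. apply injective_projections; simpl; ring.
  - rewrite sum_Sn, IH. reflexivity.
Qed.

Lemma sum_n_m_1_C (a : nat -> C) N :
  sum_n_m a 1 N =
  (sum_lt (fun k => fst (a (S k))) N, sum_lt (fun k => snd (a (S k))) N).
Proof.
  induction N as [|N IH].
  - rewrite sum_n_m_zero by lia. reflexivity.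
  - rewrite sum_n_Sm, IH by lia. reflexivity.
Qed.

Lemma exp_le_compat u v : u <= v -> exp u <= exp v.
Proof. intros [H|H]; [left; apply exp_increasing; auto | subst; lra]. Qed.

Lemma continuous_of_ex_derive (f : R -> R) t : ex_derive f t -> continuous f t.
Proof. apply (ex_derive_continuous (K := R_AbsRing) (V := R_NormedModule)). Qed.

Lemma RInt_derive_eq (f df : R -> R) a b : a <= b ->
  (forall t, a <= t <= b -> is_derive f t (df t)) ->
  (forall t, a <= t <= b -> continuous df t) ->
  RInt df a b = f b - f a.
Proof.
  intros Hab Hd Hc.
  apply (is_RInt_unique (V := R_CompleteNormedModule)).
  apply (is_RInt_derive (V := R_CompleteNormedModule));
    intros t Ht; rewrite Rmin_left, Rmax_right in Ht by lra; auto.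
Qed.

Lemma ln_1_plus_le u : 0 <= u -> ln (1 + u) <= u.
Proof.
  intros Hu. rewrite <- (ln_exp u) at 2. apply ln_le; [lra | apply exp_ineq1_le].
Qed.

Lemma exp_ge_tangent m u : exp m * (1 + (u - m)) <= exp u.
Proof.
  replace (exp u) with (exp m * exp (u - m)) by (rewrite <- exp_plus; f_equal; ring).
  pose proof (exp_ineq1_le (u - m)). pose proof (exp_pos m).
  apply Rmult_le_compat_l; lra.
Qed.

Lemma exp_convex l u v : 0 <= l <= 1 ->
  exp (l * u + (1 - l) * v) <= l * exp u + (1 - l) * exp v.
Proof.
  intros Hl. set (m := l * u + (1 - l) * v).
  pose proof (exp_ge_tangent m u). pose proof (exp_ge_tangent m v).
  assert (E : l * (exp m * (1 + (u - m))) + (1 - l) * (exp m * (1 + (v - m))) = exp m)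
    by (unfold m; ring).
  nra.
Qed.

Lemma is_lim_seq_of_bound (u : nat -> R) (l C : R) :
  (forall n, (1 <= n)%nat -> Rabs (u n - l) <= C / INR n) -> is_lim_seq u l.
Proof.
  intros H.
  assert (Hinv : is_lim_seq (fun n => C / INR n) 0).
  { replace (Finite 0) with (Rbar_mult C (Rbar_inv p_infty)) by (simpl; f_equal; ring).
    apply is_lim_seq_scal_l, is_lim_seq_inv; [apply is_lim_seq_INR | discriminate]. }
  apply is_lim_seq_le_le_loc with (u := fun n => l - C / INR n) (w := fun n => l + C / INR n).
  - exists 1%nat. intros n Hn. specialize (H n Hn). apply Rabs_le_between in H. lra.
  - replace (Finite l) with (Finite (l - 0)) by (f_equal; ring).
    apply is_lim_seq_minus'; [apply is_lim_seq_const | exact Hinv].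
  - replace (Finite l) with (Finite (l + 0)) by (f_equal; ring).
    apply is_lim_seq_plus'; [apply is_lim_seq_const | exact Hinv].
Qed.

(** * The Gamma function *)

Definition Gamma_integrand (x t : R) : R := Rpower t (x - 1) * exp (- t).

Lemma Gamma_integrand_exp x t : Gamma_integrand x t = exp ((x - 1) * ln t - t).
Proof. unfold Gamma_integrand, Rpower. rewrite <- exp_plus. f_equal. Qed.

Lemma Gamma_integrand_pos x t : 0 < Gamma_integrand x t.
Proof. rewrite Gamma_integrand_exp. apply exp_pos. Qed.

Lemma continuous_Gamma_integrand x t : 0 < t -> continuous (Gamma_integrand x) t.
Proof.
  intros Ht.
  apply continuous_ext with (f := fun t => exp ((x - 1) * ln t - t)).
  { intros; symmetry; apply Gamma_integrand_exp. }
  apply continuous_of_ex_derive. auto_derive. exact Ht.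
Qed.

Lemma ex_RInt_Gamma_integrand x a b : 0 < a -> a <= b -> ex_RInt (Gamma_integrand x) a b.
Proof.
  intros Ha Hab. apply (ex_RInt_continuous (V := R_CompleteNormedModule)).
  intros z Hz. rewrite Rmin_left in Hz by lra. apply continuous_Gamma_integrand. lra.
Qed.

Definition Gamma_part (x a b : R) : R := RInt (Gamma_integrand x) a b.

Lemma is_RInt_Gamma_part x a b :
  0 < a -> a <= b -> is_RInt (Gamma_integrand x) a b (Gamma_part x a b).
Proof.
  intros. apply (RInt_correct (V := R_CompleteNormedModule)).
  apply ex_RInt_Gamma_integrand; auto.
Qed.

Lemma Gamma_part_ge0 x a b : 0 < a -> a <= b -> 0 <= Gamma_part x a b.
Proof.
  intros Ha Hab. apply RInt_ge_0; auto.
  - apply ex_RInt_Gamma_integrand; auto.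
  - intros; left; apply Gamma_integrand_pos.
Qed.

Lemma Gamma_part_Chasles x a b c : 0 < a -> a <= b -> b <= c ->
  Gamma_part x a c = Gamma_part x a b + Gamma_part x b c.
Proof.
  intros. unfold Gamma_part. symmetry.
  apply (RInt_Chasles (V := R_CompleteNormedModule));
    apply ex_RInt_Gamma_integrand; lra.
Qed.

Lemma Gamma_part_le_widen x a b a' b' : 0 < a' -> a' <= a -> a <= b -> b <= b' ->
  Gamma_part x a b <= Gamma_part x a' b'.
Proof.
  intros. rewrite (Gamma_part_Chasles x a' a b'), (Gamma_part_Chasles x a b b') by lra.
  pose proof (Gamma_part_ge0 x a' a). pose proof (Gamma_part_ge0 x b b'). lra.
Qed.

Definition Gamma_parts (x y : R) : Prop :=
  exists a b, 0 < a /\ a <= b /\ y = Gamma_part x a b.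

Definition Gamma_part_bound (x K : R) : Prop :=
  forall a b, 0 < a -> a <= b -> Gamma_part x a b <= K.

(* The partial integrals increase as [a] decreases and [b] increases, so the
   improper integral is their supremum as soon as they are bounded. *)
Lemma Gamma_is_lub_of_bound x K : Gamma_part_bound x K -> is_lub (Gamma_parts x) (Gamma x).
Proof.
  intros HB.
  assert (Hbd : bound (Gamma_parts x)).
  { exists K. intros y (a & b & Ha & Hab & ->). apply HB; auto. }
  assert (Hne : exists y, Gamma_parts x y) by (exists (Gamma_part x 1 1), 1, 1; repeat split; lra).
  destruct (completeness (Gamma_parts x) Hbd Hne) as [S [HS1 HS2]].
  replace (Gamma x) with S; [split; auto|].
  symmetry. unfold Gamma.
  apply (is_RInt_gen_unique (Fa := at_right 0) (Fb := Rbar_locally p_infty)).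
  intros P [eps HP].
  assert (Hex : exists a0 b0, 0 < a0 /\ a0 <= b0 /\ S - eps < Gamma_part x a0 b0).
  { apply NNPP. intros Hn.
    assert (S <= S - eps).
    { apply HS2. intros y (a & b & Ha & Hab & ->).
      apply Rnot_lt_le. intros Hl. apply Hn. exists a, b. auto. }
    destruct eps; simpl in *; lra. }
  destruct Hex as (a0 & b0 & Ha0 & Hab0 & Hlt).
  apply (Filter_prod _ _ _ (fun a => 0 < a < a0) (fun b => b0 < b)).
  - exists (mkposreal a0 Ha0). intros y Hy Hy0. split; auto.
    unfold ball in Hy; simpl in Hy; unfold AbsRing_ball, abs, minus, plus, opp in Hy; simpl in Hy.
    apply Rabs_lt_between in Hy. lra.
  - exists b0. auto.
  - intros a b [Ha1 Ha2] Hb. exists (Gamma_part x a b). split.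
    + apply is_RInt_Gamma_part; lra.
    + apply HP. unfold ball; simpl; unfold AbsRing_ball, abs, minus, plus, opp; simpl.
      assert (Gamma_part x a b <= S) by (apply HS1; exists a, b; repeat split; lra).
      assert (Gamma_part x a0 b0 <= Gamma_part x a b) by (apply Gamma_part_le_widen; lra).
      apply Rabs_lt_between. lra.
Qed.

(* Near [0] bound [e^{-t}] by [1]. *)
Lemma Gamma_part_le_near_0 x a : 0 < x -> 0 < a <= 1 -> Gamma_part x a 1 <= 1 / x.
Proof.
  intros Hx Ha.
  apply Rle_trans with (RInt (fun t => exp ((x - 1) * ln t)) a 1).
  - apply RInt_le; [lra | apply ex_RInt_Gamma_integrand; lra | |].
    + apply (ex_RInt_continuous (V := R_CompleteNormedModule)).
      intros z Hz. rewrite Rmin_left in Hz by lra.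
      apply continuous_of_ex_derive. auto_derive. lra.
    + intros t Ht. rewrite Gamma_integrand_exp. apply exp_le_compat.
      assert (exp (- t) <= 1) by (rewrite <- exp_0; apply exp_le_compat; lra). lra.
  - rewrite (RInt_derive_eq (fun t => exp (x * ln t) / x)); [| lra | |].
    + rewrite ln_1, Rmult_0_r, exp_0.
      assert (0 < exp (x * ln a) / x) by (apply Rdiv_lt_0_compat; [apply exp_pos | lra]).
      lra.
    + intros t Ht. auto_derive; [lra|].
      replace ((x - 1) * ln t) with (x * ln t + - ln t) by ring.
      rewrite exp_plus, exp_Ropp, exp_ln by lra. field. split; lra.
    + intros t Ht. apply continuous_of_ex_derive. auto_derive. lra.
Qed.

(* Away from [0] bound [t^{x-1}] by [1]. *)
Lemma Gamma_part_le_from_1 x b : x <= 1 -> 1 <= b -> Gamma_part x 1 b <= 1.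
Proof.
  intros Hx Hb.
  apply Rle_trans with (RInt (fun t => exp (- t)) 1 b).
  - apply RInt_le; [lra | apply ex_RInt_Gamma_integrand; lra | |].
    + apply (ex_RInt_continuous (V := R_CompleteNormedModule)).
      intros z Hz. apply continuous_of_ex_derive. auto_derive. auto.
    + intros t Ht. rewrite Gamma_integrand_exp. apply exp_le_compat.
      assert (0 <= ln t) by (rewrite <- ln_1; apply ln_le; lra).
      assert ((x - 1) * ln t <= 0) by (apply Rmult_le_0_r; lra). lra.
  - rewrite (RInt_derive_eq (fun t => - exp (- t))); [| lra | |].
    + pose proof (exp_pos (- b)).
      pose proof (exp_le_compat (Ropp 1) 0 ltac:(lra)) as He. rewrite exp_0 in He. lra.
    + intros t Ht. auto_derive; [auto | ring].
    + intros t Ht. apply continuous_of_ex_derive. auto_derive. auto.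
Qed.

Lemma Gamma_part_bound_01 x : 0 < x <= 1 -> Gamma_part_bound x (1 / x + 1).
Proof.
  intros Hx a b Ha Hab.
  set (a' := Rmin a 1). set (b' := Rmax b 1).
  assert (Ha' : 0 < a') by (unfold a'; apply Rmin_glb_lt; lra).
  assert (Ha'1 : a' <= 1) by apply Rmin_r. assert (Haa : a' <= a) by apply Rmin_l.
  assert (Hb'1 : 1 <= b') by apply Rmax_r. assert (Hbb : b <= b') by apply Rmax_l.
  apply Rle_trans with (Gamma_part x a' b'); [apply Gamma_part_le_widen; lra|].
  rewrite (Gamma_part_Chasles x a' 1 b') by lra.
  pose proof (Gamma_part_le_near_0 x a' ltac:(lra) ltac:(lra)).
  pose proof (Gamma_part_le_from_1 x b' ltac:(lra) Hb'1).
  lra.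
Qed.

Lemma Gamma_part_succ x a b : 0 < x -> 0 < a -> a <= b ->
  Gamma_part (x + 1) a b = exp (x * ln a - a) - exp (x * ln b - b) + x * Gamma_part x a b.
Proof.
  intros Hx Ha Hab.
  assert (E : RInt (fun t => Gamma_integrand (x + 1) t - x * Gamma_integrand x t) a b
              = exp (x * ln a - a) - exp (x * ln b - b)).
  { rewrite (RInt_derive_eq (fun t => - exp (x * ln t - t))); [lra | auto | |].
    - intros t Ht. auto_derive; [lra|].
      rewrite !Gamma_integrand_exp.
      replace ((x + 1 - 1) * ln t - t) with (x * ln t + - t) by ring.
      replace ((x - 1) * ln t - t) with ((x * ln t + - t) + - ln t) by ring.
      rewrite (exp_plus (x * ln t + - t) (- ln t)), exp_Ropp, exp_ln by lra. field. lra.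
    - intros t Ht.
      apply continuous_ext with
        (f := fun t => exp ((x + 1 - 1) * ln t - t) - x * exp ((x - 1) * ln t - t)).
      { intros; rewrite !Gamma_integrand_exp; reflexivity. }
      apply continuous_of_ex_derive. auto_derive. lra. }
  assert (E2 : RInt (fun t => Gamma_integrand (x + 1) t - x * Gamma_integrand x t) a b
               = Gamma_part (x + 1) a b - x * Gamma_part x a b).
  { apply (is_RInt_unique (V := R_CompleteNormedModule)).
    apply (is_RInt_minus (V := R_CompleteNormedModule)); [apply is_RInt_Gamma_part; auto|].
    apply (is_RInt_scal (V := R_CompleteNormedModule) _ _ _ x).
    apply is_RInt_Gamma_part; auto. }
  lra.
Qed.

Lemma Gamma_part_bound_succ x K :
  0 < x -> Gamma_part_bound x K -> Gamma_part_bound (x + 1) (1 + x * K).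
Proof.
  intros Hx HB a b Ha Hab.
  set (a' := Rmin a 1).
  assert (Ha' : 0 < a') by (unfold a'; apply Rmin_glb_lt; lra).
  assert (Ha'1 : a' <= 1) by apply Rmin_r. assert (Haa : a' <= a) by apply Rmin_l.
  apply Rle_trans with (Gamma_part (x + 1) a' b); [apply Gamma_part_le_widen; lra|].
  rewrite Gamma_part_succ by lra.
  pose proof (exp_pos (x * ln b - b)).
  assert (exp (x * ln a' - a') <= 1).
  { rewrite <- exp_0. apply exp_le_compat.
    assert (ln a' <= 0) by (rewrite <- ln_1; apply ln_le; lra).
    assert (x * ln a' <= 0) by (apply Rmult_le_0_l; lra). lra. }
  assert (x * Gamma_part x a' b <= x * K)
    by (apply Rmult_le_compat_l; [lra | apply HB; lra]).
  lra.
Qed.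

Lemma Gamma_part_bounded x : 0 < x -> exists K, Gamma_part_bound x K.
Proof.
  intros Hx. destruct (INR_unbounded x) as [n Hn].
  revert x Hx Hn. induction n as [|n IH]; intros x Hx Hn.
  - exists (1 / x + 1). apply Gamma_part_bound_01. simpl in Hn. lra.
  - destruct (Rle_or_lt x 1) as [H1|H1].
    + exists (1 / x + 1). apply Gamma_part_bound_01. lra.
    + rewrite S_INR in Hn. destruct (IH (x - 1)) as [K HK]; [lra | lra |].
      exists (1 + (x - 1) * K). replace x with ((x - 1) + 1) at 1 by ring.
      apply Gamma_part_bound_succ; auto. lra.
Qed.

Lemma Gamma_is_lub x : 0 < x -> is_lub (Gamma_parts x) (Gamma x).
Proof.
  intros Hx. destruct (Gamma_part_bounded x Hx) as [K HK].
  exact (Gamma_is_lub_of_bound x K HK).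
Qed.

Lemma Gamma_part_le_Gamma x a b : 0 < x -> 0 < a -> a <= b -> Gamma_part x a b <= Gamma x.
Proof. intros Hx Ha Hab. apply (proj1 (Gamma_is_lub x Hx)). exists a, b. auto. Qed.

Lemma Gamma_le_of_part_bound x K : 0 < x -> Gamma_part_bound x K -> Gamma x <= K.
Proof.
  intros Hx H. apply (proj2 (Gamma_is_lub x Hx)). intros y (a & b & Ha & Hab & ->). auto.
Qed.

Lemma Gamma_pos x : 0 < x -> 0 < Gamma x.
Proof.
  intros Hx. apply Rlt_le_trans with (Gamma_part x 1 2); [|apply Gamma_part_le_Gamma; lra].
  unfold Gamma_part. apply RInt_gt_0; [lra | intros; apply Gamma_integrand_pos |].
  intros; apply continuous_Gamma_integrand; lra.
Qed.

Lemma boundary_term_small_at_0 x eps a : 0 < x -> 0 < eps -> 0 < a ->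
  exists a', 0 < a' <= a /\ exp (x * ln a' - a') < eps.
Proof.
  intros Hx He Ha.
  set (a' := Rmin a (exp (ln eps / x))).
  assert (Ha' : 0 < a') by (unfold a'; apply Rmin_glb_lt; [lra | apply exp_pos]).
  exists a'. split; [split; auto; apply Rmin_l|].
  rewrite <- (exp_ln eps) by auto. apply exp_increasing.
  assert (ln a' <= ln eps / x).
  { rewrite <- (ln_exp (ln eps / x)). apply ln_le; auto. apply Rmin_r. }
  assert (x * ln a' <= ln eps).
  { apply Rmult_le_compat_l with (r := x) in H; [|lra].
    replace (x * (ln eps / x)) with (ln eps) in H by (field; lra). auto. }
  lra.
Qed.

Lemma boundary_term_small_at_infty x eps b : 0 < x -> 0 < eps ->
  exists b', b <= b' /\ 0 < b' /\ exp (x * ln b' - b') < eps.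
Proof.
  intros Hx He.
  set (b' := Rmax (Rmax b 1) (2 * (x * ln (2 * x) - ln eps) + 1)).
  pose proof (Rmax_l b 1). pose proof (Rmax_r b 1).
  pose proof (Rmax_l (Rmax b 1) (2 * (x * ln (2 * x) - ln eps) + 1)).
  pose proof (Rmax_r (Rmax b 1) (2 * (x * ln (2 * x) - ln eps) + 1)).
  fold b' in H1, H2.
  exists b'. split; [lra | split; [lra|]].
  rewrite <- (exp_ln eps) by auto. apply exp_increasing.
  (* [ln b' <= ln (2x) + b' / (2x) - 1] since [ln y <= y - 1] *)
  assert (Hl : ln b' <= ln (2 * x) + b' / (2 * x) - 1).
  { replace (ln b') with (ln (2 * x) + ln (b' / (2 * x))).
    2:{ rewrite <- ln_mult by (try apply Rdiv_lt_0_compat; lra). f_equal. field. lra. }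
    pose proof (exp_ineq1_le (ln (b' / (2 * x)))).
    rewrite exp_ln in H3 by (apply Rdiv_lt_0_compat; lra). lra. }
  apply Rmult_le_compat_l with (r := x) in Hl; [|lra].
  replace (x * (ln (2 * x) + b' / (2 * x) - 1)) with (x * ln (2 * x) + b' / 2 - x) in Hl
    by (field; lra).
  lra.
Qed.

Lemma Gamma_succ x : 0 < x -> Gamma (x + 1) = x * Gamma x.
Proof.
  intros Hx. apply Rle_antisym.
  - apply Gamma_le_of_part_bound; [lra|]. intros a b Ha Hab.
    apply Rle_plus_epsilon. intros eps He.
    destruct (boundary_term_small_at_0 x eps a Hx He Ha) as (a' & [Ha' Ha'a] & Hs).
    apply Rle_trans with (Gamma_part (x + 1) a' b); [apply Gamma_part_le_widen; lra|].
    rewrite Gamma_part_succ by lra.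
    pose proof (exp_pos (x * ln b - b)).
    assert (x * Gamma_part x a' b <= x * Gamma x)
      by (apply Rmult_le_compat_l; [lra | apply Gamma_part_le_Gamma; lra]).
    lra.
  - assert (H : Gamma x <= Gamma (x + 1) / x).
    { apply Gamma_le_of_part_bound; auto. intros a b Ha Hab.
      apply Rle_plus_epsilon. intros eps He.
      destruct (boundary_term_small_at_infty x (x * eps) b Hx ltac:(nra))
        as (b' & Hbb & Hb' & Hs).
      apply Rle_trans with (Gamma_part x a b'); [apply Gamma_part_le_widen; lra|].
      pose proof (Gamma_part_succ x a b' Hx Ha ltac:(lra)).
      pose proof (exp_pos (x * ln a - a)).
      pose proof (Gamma_part_le_Gamma (x + 1) a b' ltac:(lra) Ha ltac:(lra)).
      apply Rmult_le_reg_l with x; auto.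
      replace (x * (Gamma (x + 1) / x + eps)) with (Gamma (x + 1) + x * eps) by (field; lra).
      lra. }
    apply Rmult_le_compat_l with (r := x) in H; [|lra].
    replace (x * (Gamma (x + 1) / x)) with (Gamma (x + 1)) in H by (field; lra). exact H.
Qed.

Lemma Gamma_integrand_div x A t : 0 < A ->
  Gamma_integrand x t / A = exp ((x - 1) * ln t - t - ln A).
Proof.
  intros HA. rewrite Gamma_integrand_exp.
  replace ((x - 1) * ln t - t - ln A) with ((x - 1) * ln t - t + - ln A) by ring.
  rewrite exp_plus, exp_Ropp, exp_ln by auto. reflexivity.
Qed.

(* Weighted AM-GM applied to the two integrands normalised by [A] and [B]. *)
Lemma Gamma_integrand_convex x y l A B t : 0 < A -> 0 < B -> 0 <= l <= 1 ->
  Gamma_integrand (l * x + (1 - l) * y) t <=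
  exp (l * ln A + (1 - l) * ln B) *
  (l / A * Gamma_integrand x t + (1 - l) / B * Gamma_integrand y t).
Proof.
  intros HA HB Hl.
  set (u := (x - 1) * ln t - t - ln A). set (v := (y - 1) * ln t - t - ln B).
  replace (Gamma_integrand (l * x + (1 - l) * y) t)
    with (exp (l * ln A + (1 - l) * ln B) * exp (l * u + (1 - l) * v)).
  2:{ rewrite Gamma_integrand_exp, <- exp_plus. f_equal. unfold u, v. ring. }
  apply Rmult_le_compat_l; [left; apply exp_pos|].
  eapply Rle_trans; [apply exp_convex; auto|].
  unfold u, v. rewrite <- !Gamma_integrand_div by auto. right. field. lra.
Qed.

Lemma Gamma_log_convex x y l : 0 < x -> 0 < y -> 0 <= l <= 1 ->
  Gamma (l * x + (1 - l) * y) <= exp (l * ln (Gamma x) + (1 - l) * ln (Gamma y)).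
Proof.
  intros Hx Hy Hl.
  assert (Hz : 0 < l * x + (1 - l) * y) by nra.
  pose proof (Gamma_pos x Hx) as Gx. pose proof (Gamma_pos y Hy) as Gy.
  set (C := exp (l * ln (Gamma x) + (1 - l) * ln (Gamma y))).
  apply Gamma_le_of_part_bound; auto. intros a b Ha Hab.
  set (mix := fun t => l / Gamma x * Gamma_integrand x t + (1 - l) / Gamma y * Gamma_integrand y t).
  assert (Hmix : is_RInt mix a b
                   (l / Gamma x * Gamma_part x a b + (1 - l) / Gamma y * Gamma_part y a b)).
  { apply (is_RInt_plus (V := R_CompleteNormedModule));
      apply (is_RInt_scal (V := R_CompleteNormedModule)); apply is_RInt_Gamma_part; auto. }
  apply Rle_trans with (RInt (fun t => C * mix t) a b).
  - apply RInt_le; auto.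
    + apply ex_RInt_Gamma_integrand; auto.
    + apply (ex_RInt_scal (V := R_CompleteNormedModule)). eexists. exact Hmix.
    + intros t Ht. apply Gamma_integrand_convex; auto.
  - rewrite (RInt_scal (V := R_CompleteNormedModule)) by (eexists; exact Hmix).
    rewrite (is_RInt_unique _ _ _ _ Hmix).
    pose proof (Gamma_part_le_Gamma x a b Hx Ha Hab).
    pose proof (Gamma_part_le_Gamma y a b Hy Ha Hab).
    assert (0 < C) by apply exp_pos.
    assert (l / Gamma x * Gamma_part x a b <= l).
    { unfold Rdiv. rewrite Rmult_assoc. rewrite <- (Rmult_1_r l) at 2.
      apply Rmult_le_compat_l; [lra|].
      apply Rmult_le_reg_l with (Gamma x); auto. field_simplify; lra. }
    assert ((1 - l) / Gamma y * Gamma_part y a b <= 1 - l).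
    { unfold Rdiv. rewrite Rmult_assoc. rewrite <- (Rmult_1_r (1 - l)) at 2.
      apply Rmult_le_compat_l; [lra|].
      apply Rmult_le_reg_l with (Gamma y); auto. field_simplify; lra. }
    unfold scal; simpl; unfold mult; simpl. nra.
Qed.

Definition lnGamma (x : R) : R := ln (Gamma x).

Lemma lnGamma_succ x : 0 < x -> lnGamma (x + 1) = ln x + lnGamma x.
Proof.
  intros Hx. unfold lnGamma. rewrite Gamma_succ by auto.
  apply ln_mult; [auto | apply Gamma_pos; auto].
Qed.

Lemma lnGamma_convex x y l : 0 < x -> 0 < y -> 0 <= l <= 1 ->
  lnGamma (l * x + (1 - l) * y) <= l * lnGamma x + (1 - l) * lnGamma y.
Proof.
  intros Hx Hy Hl. unfold lnGamma.
  rewrite <- (ln_exp (l * ln (Gamma x) + (1 - l) * ln (Gamma y))).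
  apply ln_le; [apply Gamma_pos; nra | apply Gamma_log_convex; auto].
Qed.

Lemma lnGamma_ratio a b : 0 < a -> 0 < b -> ln (Gamma a / Gamma b) = lnGamma a - lnGamma b.
Proof.
  intros Ha Hb. pose proof (Gamma_pos a Ha). pose proof (Gamma_pos b Hb).
  unfold Rdiv, lnGamma. rewrite ln_mult, ln_Rinv by (try apply Rinv_0_lt_compat; auto). ring.
Qed.

(* Convexity of [lnGamma] on the three points [N < N + 1 < N + 1 + x] (lower
   bound) and [N + 1 < N + 1 + x < N + 2 + x] (upper bound). *)
Lemma lnGamma_slope_bounds N x : 1 <= N -> 0 < x ->
  x * ln N <= lnGamma (N + 1 + x) - lnGamma (N + 1) <= x * ln (N + 1 + x).
Proof.
  intros HN Hx.
  assert (Hw : forall w, 0 < w -> 0 <= w / (1 + w) <= 1 /\ 0 <= 1 / (1 + w) <= 1).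
  { intros w Hw. split; split;
      try (apply Rdiv_le_0_compat; lra);
      apply Rmult_le_reg_r with (1 + w); try lra; field_simplify; lra. }
  split.
  - pose proof (lnGamma_convex N (N + 1 + x) (x / (1 + x)) ltac:(lra) ltac:(lra)
                  (proj1 (Hw x Hx))) as H.
    replace (x / (1 + x) * N + (1 - x / (1 + x)) * (N + 1 + x)) with (N + 1) in H
      by (field; lra).
    rewrite lnGamma_succ in H by lra. rewrite lnGamma_succ by lra.
    apply Rmult_le_compat_l with (r := 1 + x) in H; [|lra].
    replace ((1 + x) * (x / (1 + x) * lnGamma N + (1 - x / (1 + x)) * lnGamma (N + 1 + x)))
      with (x * lnGamma N + lnGamma (N + 1 + x)) in H by (field; lra).
    nra.
  - pose proof (lnGamma_convex (N + 1) (N + 2 + x) (1 / (1 + x)) ltac:(lra) ltac:(lra)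
                  (proj2 (Hw x Hx))) as H.
    replace (1 / (1 + x) * (N + 1) + (1 - 1 / (1 + x)) * (N + 2 + x)) with (N + 1 + x) in H
      by (field; lra).
    replace (N + 2 + x) with ((N + 1 + x) + 1) in H by ring.
    rewrite (lnGamma_succ (N + 1 + x)) in H by lra.
    apply Rmult_le_compat_l with (r := 1 + x) in H; [|lra].
    replace ((1 + x) * (1 / (1 + x) * lnGamma (N + 1)
               + (1 - 1 / (1 + x)) * (ln (N + 1 + x) + lnGamma (N + 1 + x))))
      with (lnGamma (N + 1) + x * (ln (N + 1 + x) + lnGamma (N + 1 + x))) in H by (field; lra).
    nra.
Qed.

Lemma lnGamma_add_nat n x : 0 < x ->
  lnGamma (x + INR n + 1) = lnGamma x + sum_lt (fun i => ln (x + INR i)) (S n).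
Proof.
  intros Hx. induction n as [|n IH].
  - cbn [sum_lt INR]. rewrite !Rplus_0_r, lnGamma_succ by auto. ring.
  - pose proof (pos_INR n). change (sum_lt ?f (S (S n))) with (sum_lt f (S n) + f (S n)); cbv beta.
    rewrite S_INR. replace (x + (INR n + 1) + 1) with ((x + INR n + 1) + 1) by ring.
    rewrite lnGamma_succ, IH by lra. replace (x + (INR n + 1)) with (x + INR n + 1) by ring.
    ring.
Qed.

(* Gauss's product formula for [Gamma], with an explicit error term. *)
Lemma Gauss_product_error n x : (1 <= n)%nat -> 0 < x <= 2 ->
  0 <= lnGamma x + sum_lt (fun i => ln (x + INR i)) (S n) - lnGamma (INR n + 1)
       - x * ln (INR n) <= 6 / INR n.
Proof.
  intros Hn Hx.
  assert (HN : 1 <= INR n) by (apply (le_INR 1); auto).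
  pose proof (lnGamma_slope_bounds (INR n) x HN ltac:(lra)) as [H1 H2].
  replace (INR n + 1 + x) with (x + INR n + 1) in H1, H2 by ring.
  rewrite lnGamma_add_nat in H1, H2 by lra.
  split; [lra|].
  assert (E : ln (x + INR n + 1) - ln (INR n) = ln (1 + (1 + x) / INR n)).
  { replace (1 + (1 + x) / INR n) with ((x + INR n + 1) * / INR n) by (field; lra).
    rewrite ln_mult, ln_Rinv by (try apply Rinv_0_lt_compat; lra). ring. }
  assert (ln (1 + (1 + x) / INR n) <= (1 + x) / INR n)
    by (apply ln_1_plus_le; apply Rdiv_le_0_compat; lra).
  assert (x * (ln (x + INR n + 1) - ln (INR n)) <= x * ((1 + x) / INR n))
    by (rewrite E; apply Rmult_le_compat_l; lra).
  assert (x * ((1 + x) / INR n) <= 6 / INR n).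
  { unfold Rdiv. rewrite <- Rmult_assoc. apply Rmult_le_compat_r; [|nra].
    left; apply Rinv_0_lt_compat; lra. }
  lra.
Qed.

(** * Periodic sums against [ln ((k + 2) / (k + 1))] *)

Definition lnGamma_step (M j : nat) : R :=
  lnGamma (INR (S (S j)) / INR M) - lnGamma (INR (S j) / INR M).

Definition ln_succ_ratio (k : nat) : R := ln (INR (S (S k)) / INR (S k)).

Lemma ln_succ_ratio_bounds k : 0 <= ln_succ_ratio k <= 1 / INR (S k).
Proof.
  assert (H : 0 < INR (S k)) by (apply lt_0_INR; lia).
  unfold ln_succ_ratio.
  replace (INR (S (S k)) / INR (S k)) with (1 + 1 / INR (S k))
    by (rewrite (S_INR (S k)); field; lra).
  assert (0 < 1 / INR (S k)) by (apply Rdiv_lt_0_compat; lra).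
  split; [rewrite <- ln_1; apply ln_le; lra | apply ln_1_plus_le; lra].
Qed.

Lemma ln_succ_ratio_scaled M k i : (0 < M)%nat ->
  ln_succ_ratio (k + i * M) =
  ln (INR (S (S k)) / INR M + INR i) - ln (INR (S k) / INR M + INR i).
Proof.
  intros HM. assert (0 < INR M) by (apply lt_0_INR; auto). pose proof (pos_INR i).
  assert (0 < INR (S k)) by (apply lt_0_INR; lia).
  assert (0 < INR (S (S k))) by (apply lt_0_INR; lia).
  unfold ln_succ_ratio.
  rewrite <- ln_div by (apply Rplus_lt_le_0_compat; try apply Rdiv_lt_0_compat; lra).
  f_equal. rewrite !S_INR, plus_INR, mult_INR, ?S_INR. field.
  split; [lra|]. rewrite S_INR in *. nra.
Qed.

Section PeriodicSums.

Variable M : nat.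
Variable c : nat -> R.
Variable B : R.
Hypothesis M_pos : (0 < M)%nat.
Hypothesis c_periodic : forall k, c (k + M)%nat = c k.
Hypothesis c_sum_period : sum_lt c M = 0.
Hypothesis c_bounded : forall k, Rabs (c k) <= B.

Lemma c_periodic_mult i k : c (k + i * M)%nat = c k.
Proof.
  induction i as [|i IH]; [rewrite Nat.mul_0_l, Nat.add_0_r; auto|].
  rewrite Nat.mul_succ_l, Nat.add_assoc, c_periodic. auto.
Qed.

Lemma sum_lt_periodic_fold g n :
  sum_lt (fun j => c j * sum_lt (fun i => g (j + i * M)%nat) n) M =
  sum_lt (fun k => c k * g k) (n * M).
Proof.
  induction n as [|n IH].
  - simpl. rewrite (sum_lt_ext _ (fun _ => 0)) by (intros; simpl; ring). apply sum_lt_zero.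
  - rewrite (sum_lt_ext _ (fun j => c j * sum_lt (fun i => g (j + i * M)%nat) n
                                    + c j * g (j + n * M)%nat)) by (intros; simpl; ring).
    rewrite sum_lt_plus, IH, Nat.mul_succ_l, sum_lt_add. f_equal.
    apply sum_lt_ext. intros k _. rewrite (Nat.add_comm (n * M) k), c_periodic_mult. auto.
Qed.

(* By Gauss's product formula at [(j + 1) / M] and [(j + 2) / M],
   [lnGamma_step M j] is [ln n / M] minus the sum of [ln_succ_ratio] over the
   residue class of [j] below [(n + 1) M], up to [O(1/n)]; the [ln n / M]
   terms cancel because [c] has mean zero. *)
Lemma periodic_sum_ln_succ_ratio_error n : (1 <= n)%nat ->
  Rabs (sum_lt (fun j => c j * lnGamma_step M j) M
        + sum_lt (fun k => c k * ln_succ_ratio k) (S n * M)) <= INR M * (B * (6 / INR n)).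
Proof.
  intros Hn.
  assert (HMr : 0 < INR M) by (apply lt_0_INR; auto).
  assert (HNr : 1 <= INR n) by (apply (le_INR 1); auto).
  set (rho := fun x => lnGamma x + sum_lt (fun i => ln (x + INR i)) (S n)
                       - lnGamma (INR n + 1) - x * ln (INR n)).
  set (e := fun j => rho (INR (S (S j)) / INR M) - rho (INR (S j) / INR M)).
  assert (Hstep : forall j, (j < M)%nat ->
    c j * lnGamma_step M j =
    c j * e j - c j * sum_lt (fun i => ln_succ_ratio (j + i * M)) (S n)
    + ln (INR n) / INR M * c j).
  { intros j Hj.
    rewrite (sum_lt_ext _ _ _ (fun i _ => ln_succ_ratio_scaled M j i M_pos)), sum_lt_minus.
    unfold e, rho, lnGamma_step. rewrite !S_INR. field. lra. }
  rewrite (sum_lt_ext _ _ _ Hstep), sum_lt_plus, sum_lt_minus, sum_lt_scal, c_sum_period.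
  rewrite sum_lt_periodic_fold, Rmult_0_r, Rplus_0_r.
  replace (sum_lt (fun j => c j * e j) M - sum_lt (fun k => c k * ln_succ_ratio k) (S n * M)
           + sum_lt (fun k => c k * ln_succ_ratio k) (S n * M))
    with (sum_lt (fun j => c j * e j) M) by ring.
  apply Rabs_sum_lt_le. intros j Hj.
  assert (Hx : forall m, (m <= M + 1)%nat -> (1 <= m)%nat -> 0 < INR m / INR M <= 2).
  { intros m Hm1 Hm2. assert (1 <= INR m <= INR M + 1).
    { split; [apply (le_INR 1); auto | rewrite <- S_INR; apply le_INR; lia]. }
    assert (1 <= INR M) by (apply (le_INR 1); auto).
    split; [apply Rdiv_lt_0_compat; lra|].
    apply Rmult_le_reg_r with (INR M); [lra|]. field_simplify; lra. }
  pose proof (Gauss_product_error n _ Hn (Hx (S j) ltac:(lia) ltac:(lia))).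
  pose proof (Gauss_product_error n _ Hn (Hx (S (S j)) ltac:(lia) ltac:(lia))).
  assert (Rabs (e j) <= 6 / INR n) by (unfold e, rho; apply Rabs_le; lra).
  rewrite Rabs_mult. apply Rmult_le_compat; auto using Rabs_pos.
Qed.

Lemma is_lim_seq_periodic_sum_ln_succ_ratio :
  is_lim_seq (fun n => sum_lt (fun k => c k * ln_succ_ratio k) (n * M))
             (- sum_lt (fun j => c j * lnGamma_step M j) M).
Proof.
  apply is_lim_seq_incr_1.
  apply is_lim_seq_of_bound with (C := INR M * (B * 6)). intros n Hn.
  unfold Rminus. rewrite Ropp_involutive, Rplus_comm.
  eapply Rle_trans; [apply periodic_sum_ln_succ_ratio_error; auto|]. right. field.
  apply not_0_INR. lia.
Qed.

End PeriodicSums.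

(** * The logarithmic series on the unit circle *)

Lemma is_derive_sum_lt_pow_div (a : nat -> R) N t :
  is_derive (fun t => sum_lt (fun k => a k * t ^ S k / INR (S k)) N) t
            (sum_lt (fun k => a k * t ^ k) N).
Proof.
  induction N as [|N IH]; simpl sum_lt.
  - apply (is_derive_const (K := R_AbsRing) (V := R_NormedModule) 0).
  - apply (is_derive_plus (K := R_AbsRing) (V := R_NormedModule)
             (fun t => sum_lt (fun k => a k * t ^ S k / INR (S k)) N)
             (fun t => a N * t ^ S N / INR (S N))); auto.
    pose proof (lt_0_INR (S N) ltac:(lia)).
    auto_derive; [lra|].
    change (match N with 0%nat => 1 | S _ => INR N + 1 end) with (INR (S N)). field. lra.
Qed.

Lemma nondecreasing_of_derive_ge0 (g dg : R -> R) :
  (forall t, 0 <= t <= 1 -> is_derive g t (dg t)) ->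
  (forall t, 0 <= t <= 1 -> 0 <= dg t) -> g 0 <= g 1.
Proof.
  intros Hd Hp.
  destruct (MVT_gen g 0 1 dg) as (xi & Hxi & E);
    try (intros x Hx; rewrite Rmin_left, Rmax_right in Hx by lra).
  - apply Hd; lra.
  - apply continuity_pt_filterlim, continuous_of_ex_derive. eexists. apply Hd; lra.
  - rewrite Rmin_left, Rmax_right in Hxi by lra. specialize (Hp xi Hxi). lra.
Qed.

(* Termwise integration of [dF] over [[0, 1]], by the mean value theorem. *)
Lemma sum_div_succ_error (a : nat -> R) (F dF : R -> R) K N :
  (forall t, 0 <= t <= 1 -> is_derive F t (dF t)) ->
  (forall t, 0 <= t <= 1 -> Rabs (sum_lt (fun k => a k * t ^ k) N - dF t) <= K * t ^ N) ->
  Rabs (sum_lt (fun k => a k / INR (S k)) N - (F 1 - F 0)) <= K / INR (S N).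
Proof.
  intros HF Hb.
  assert (HN : 0 < INR (S N)) by (apply lt_0_INR; lia).
  set (P := fun t => sum_lt (fun k => a k * t ^ S k / INR (S k)) N).
  set (Q := fun t => K * t ^ S N / INR (S N)).
  assert (HQ : forall t, is_derive Q t (K * t ^ N)).
  { intros t. unfold Q. auto_derive; change (match N with 0%nat => 1 | S _ => INR N + 1 end)
      with (INR (S N)); [lra | field; lra]. }
  assert (P1 : P 1 = sum_lt (fun k => a k / INR (S k)) N)
    by (apply sum_lt_ext; intros; rewrite pow1; unfold Rdiv; ring).
  assert (P0 : P 0 = 0).
  { unfold P. rewrite (sum_lt_ext _ (fun _ => 0)) by (intros; simpl; unfold Rdiv; ring).
    apply sum_lt_zero. }
  assert (Q1 : Q 1 = K / INR (S N)) by (unfold Q; rewrite pow1; field; lra).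
  assert (Q0 : Q 0 = 0) by (unfold Q; simpl; unfold Rdiv; ring).
  assert (H1 : P 0 - F 0 + Q 0 <= P 1 - F 1 + Q 1).
  { apply (nondecreasing_of_derive_ge0 (fun t => P t - F t + Q t)
             (fun t => sum_lt (fun k => a k * t ^ k) N - dF t + K * t ^ N)).
    - intros t Ht. apply (is_derive_plus (K := R_AbsRing) (V := R_NormedModule)); [|apply HQ].
      apply (is_derive_minus (K := R_AbsRing) (V := R_NormedModule));
        [apply is_derive_sum_lt_pow_div | apply HF; auto].
    - intros t Ht. specialize (Hb t Ht). apply Rabs_le_between in Hb. lra. }
  assert (H2 : Q 0 - (P 0 - F 0) <= Q 1 - (P 1 - F 1)).
  { apply (nondecreasing_of_derive_ge0 (fun t => Q t - (P t - F t))
             (fun t => K * t ^ N - (sum_lt (fun k => a k * t ^ k) N - dF t))).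
    - intros t Ht. apply (is_derive_minus (K := R_AbsRing) (V := R_NormedModule)); [apply HQ|].
      apply (is_derive_minus (K := R_AbsRing) (V := R_NormedModule));
        [apply is_derive_sum_lt_pow_div | apply HF; auto].
    - intros t Ht. specialize (Hb t Ht). apply Rabs_le_between in Hb. lra. }
  rewrite <- P1. apply Rabs_le. lra.
Qed.

Definition cosk (th : R) (k : nat) : R := cos (INR k * th).
Definition sink (th : R) (k : nat) : R := sin (INR k * th).

Lemma cosk_0 th : cosk th 0 = 1.
Proof. unfold cosk. simpl. rewrite Rmult_0_l. apply cos_0. Qed.

Lemma sink_0 th : sink th 0 = 0.
Proof. unfold sink. simpl. rewrite Rmult_0_l. apply sin_0. Qed.

Lemma cosk_S th k : cosk th (S k) = cosk th k * cos th - sink th k * sin th.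
Proof. unfold cosk, sink. rewrite S_INR, Rmult_plus_distr_r, Rmult_1_l, cos_plus. ring. Qed.

Lemma sink_S th k : sink th (S k) = sink th k * cos th + cosk th k * sin th.
Proof. unfold cosk, sink. rewrite S_INR, Rmult_plus_distr_r, Rmult_1_l, sin_plus. ring. Qed.

Lemma cosk_sink_add th M s : cosk th M = s -> sink th M = 0 -> forall k,
  cosk th (k + M) = s * cosk th k /\ sink th (k + M) = s * sink th k.
Proof.
  unfold cosk, sink. intros Hc Hs k.
  rewrite plus_INR, Rmult_plus_distr_r, cos_plus, sin_plus, Hc, Hs. split; ring.
Qed.

Lemma cosk_sink_mul th M : cosk th M = 1 -> sink th M = 0 -> forall i,
  cosk th (i * M) = 1 /\ sink th (i * M) = 0.
Proof.
  intros Hc Hs i. induction i as [|i [IHc IHs]]; [split; [apply cosk_0 | apply sink_0]|].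
  rewrite Nat.mul_succ_l. destruct (cosk_sink_add th M 1 Hc Hs (i * M)) as [Ec Es].
  rewrite Ec, Es, IHc, IHs. split; ring.
Qed.

Section LogSeries.

Variable th : R.
Let co := cos th.
Let si := sin th.
Hypothesis cos_th_lt_1 : co < 1.

Lemma geom_sum_cosk_sink N t :
  sum_lt (fun k => cosk th k * t ^ k) N * (1 - co * t)
    + sum_lt (fun k => sink th k * t ^ k) N * (si * t) = 1 - t ^ N * cosk th N /\
  sum_lt (fun k => sink th k * t ^ k) N * (1 - co * t)
    - sum_lt (fun k => cosk th k * t ^ k) N * (si * t) = - t ^ N * sink th N.
Proof.
  induction N as [|N [IH1 IH2]]; simpl sum_lt.
  - rewrite cosk_0, sink_0. simpl. split; ring.
  - set (X := sum_lt (fun k => cosk th k * t ^ k) N) in *.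
    set (Y := sum_lt (fun k => sink th k * t ^ k) N) in *.
    rewrite cosk_S, sink_S. simpl pow. fold co si. split.
    + transitivity ((X * (1 - co * t) + Y * (si * t))
                    + cosk th N * t ^ N * (1 - co * t) + sink th N * t ^ N * (si * t));
        [ring | rewrite IH1; ring].
    + transitivity ((Y * (1 - co * t) - X * (si * t))
                    + sink th N * t ^ N * (1 - co * t) - cosk th N * t ^ N * (si * t));
        [ring | rewrite IH2; ring].
Qed.

(* [den t = |1 - w t|^2] for [w = e^{i th}]. *)
Definition den (t : R) : R := (1 - co * t) ^ 2 + (si * t) ^ 2.

Definition delta : R := Rmin 1 (1 - co).

Lemma delta_pos : 0 < delta.
Proof. unfold delta. apply Rmin_glb_lt; lra. Qed.

Lemma delta_le_1_sub_co_t t : 0 <= t <= 1 -> delta <= 1 - co * t.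
Proof.
  intros Ht. unfold delta. destruct (Rle_or_lt co 0).
  - apply Rle_trans with 1; [apply Rmin_l | nra].
  - apply Rle_trans with (1 - co); [apply Rmin_r | nra].
Qed.

Lemma den_lower t : 0 <= t <= 1 -> delta ^ 2 <= den t.
Proof.
  intros Ht. pose proof (delta_le_1_sub_co_t t Ht). pose proof delta_pos. unfold den.
  assert (0 <= (si * t) ^ 2) by (apply pow2_ge_0). simpl in *. nra.
Qed.

Lemma geom_sum_cosk_sink_closed N t : cosk th N = 1 -> sink th N = 0 ->
  sum_lt (fun k => cosk th k * t ^ k) N * den t = (1 - t ^ N) * (1 - co * t) /\
  sum_lt (fun k => sink th k * t ^ k) N * den t = (1 - t ^ N) * (si * t).
Proof.
  intros Hc Hs. destruct (geom_sum_cosk_sink N t) as [E1 E2]. rewrite Hc in E1. rewrite Hs in E2.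
  set (X := sum_lt (fun k => cosk th k * t ^ k) N) in *.
  set (Y := sum_lt (fun k => sink th k * t ^ k) N) in *.
  unfold den. split.
  - transitivity ((X * (1 - co * t) + Y * (si * t)) * (1 - co * t)
                  - (Y * (1 - co * t) - X * (si * t)) * (si * t));
      [ring | rewrite E1, E2; ring].
  - transitivity ((X * (1 - co * t) + Y * (si * t)) * (si * t)
                  + (Y * (1 - co * t) - X * (si * t)) * (1 - co * t));
      [ring | rewrite E1, E2; ring].
Qed.

Lemma sum_cosk_sink_period N : cosk th N = 1 -> sink th N = 0 ->
  sum_lt (cosk th) N = 0 /\ sum_lt (sink th) N = 0.
Proof.
  intros Hc Hs. destruct (geom_sum_cosk_sink_closed N 1 Hc Hs) as [E1 E2].
  pose proof (den_lower 1 ltac:(lra)). pose proof delta_pos.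
  assert (Hd : 0 < den 1) by nra.
  rewrite pow1, Rminus_diag, !Rmult_0_l in E1, E2.
  rewrite (sum_lt_ext _ (cosk th)) in E1 by (intros; rewrite pow1; ring).
  rewrite (sum_lt_ext _ (sink th)) in E2 by (intros; rewrite pow1; ring).
  split; [apply Rmult_eq_reg_r with (den 1) | apply Rmult_eq_reg_r with (den 1)]; lra.
Qed.

(* Real and imaginary parts of [- log (1 - w t) / w], the sum of
   [w^k t^(k+1) / (k + 1)] over [k]. *)
Definition logser_re (t : R) : R :=
  - (co * (ln (den t) / 2) + si * atan (- si * t / (1 - co * t))).
Definition logser_im (t : R) : R :=
  - (co * atan (- si * t / (1 - co * t)) - si * (ln (den t) / 2)).

Lemma logser_re_0 : logser_re 0 = 0.
Proof.
  unfold logser_re, den. replace (- si * 0 / (1 - co * 0)) with 0 by field.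
  rewrite atan_0. replace ((1 - co * 0) ^ 2 + (si * 0) ^ 2) with 1 by ring. rewrite ln_1. field.
Qed.

Lemma logser_im_0 : logser_im 0 = 0.
Proof.
  unfold logser_im, den. replace (- si * 0 / (1 - co * 0)) with 0 by field.
  rewrite atan_0. replace ((1 - co * 0) ^ 2 + (si * 0) ^ 2) with 1 by ring. rewrite ln_1. field.
Qed.

Lemma cos2_sin2_th : co * co + si * si = 1.
Proof. unfold co, si. pose proof (sin2_cos2 th). unfold Rsqr in H. lra. Qed.

Lemma is_derive_logser_re t : 0 <= t <= 1 -> is_derive logser_re t ((1 - co * t) / den t).
Proof.
  intros Ht. pose proof (delta_le_1_sub_co_t t Ht). pose proof delta_pos.
  pose proof (den_lower t Ht). pose proof cos2_sin2_th.
  assert (HD : 0 < (1 - co * t) ^ 2 + (si * t) ^ 2) by (unfold den in *; nra).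
  unfold logser_re, den. auto_derive; [repeat split; lra|].
  transitivity ((co * co + si * si - co * t * (co * co + si * si))
                / ((1 - co * t) ^ 2 + (si * t) ^ 2)).
  - field. split; [lra | simpl in *; nra].
  - rewrite H2. field. lra.
Qed.

Lemma is_derive_logser_im t : 0 <= t <= 1 -> is_derive logser_im t (si * t / den t).
Proof.
  intros Ht. pose proof (delta_le_1_sub_co_t t Ht). pose proof delta_pos.
  pose proof (den_lower t Ht). pose proof cos2_sin2_th.
  assert (HD : 0 < (1 - co * t) ^ 2 + (si * t) ^ 2) by (unfold den in *; nra).
  unfold logser_im, den. auto_derive; [repeat split; lra|].
  transitivity (si * t * (co * co + si * si) / ((1 - co * t) ^ 2 + (si * t) ^ 2)).
  - field. split; [lra | simpl in *; nra].
  - rewrite H2. field. lra.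
Qed.

Lemma log_series_error (a : nat -> R) (F num : R -> R) N :
  (forall t, 0 <= t <= 1 -> is_derive F t (num t / den t)) ->
  (forall t, sum_lt (fun k => a k * t ^ k) N * den t = (1 - t ^ N) * num t) ->
  (forall t, 0 <= t <= 1 -> Rabs (num t) <= 2) ->
  Rabs (sum_lt (fun k => a k / INR (S k)) N - (F 1 - F 0)) <= 2 / delta ^ 2 / INR (S N).
Proof.
  intros HF Hgeom Hnum. apply (sum_div_succ_error a F (fun t => num t / den t)); auto.
  intros t Ht. pose proof (den_lower t Ht). pose proof delta_pos.
  assert (Hd2 : 0 < delta ^ 2) by (simpl; nra).
  assert (E : sum_lt (fun k => a k * t ^ k) N - num t / den t = - (t ^ N) * (num t / den t)).
  { apply Rmult_eq_reg_r with (den t); [|lra].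
    rewrite Rmult_minus_distr_r, Hgeom. field. lra. }
  rewrite E, Rabs_mult, Rabs_Ropp, Rabs_pos_eq, Rmult_comm by (apply pow_le; lra).
  apply Rmult_le_compat_r; [apply pow_le; lra|].
  rewrite Rabs_div, (Rabs_pos_eq (den t)) by lra.
  unfold Rdiv. apply Rmult_le_compat; auto using Rabs_pos.
  - left; apply Rinv_0_lt_compat; lra.
  - apply Rinv_le_contravar; lra.
Qed.

Lemma log_series_limit (a : nat -> R) (F num : R -> R) M : (0 < M)%nat ->
  (forall t, 0 <= t <= 1 -> is_derive F t (num t / den t)) ->
  (forall n t, sum_lt (fun k => a k * t ^ k) (n * M) * den t = (1 - t ^ (n * M)) * num t) ->
  (forall t, 0 <= t <= 1 -> Rabs (num t) <= 2) ->
  is_lim_seq (fun n => sum_lt (fun k => a k / INR (S k)) (n * M)) (F 1 - F 0).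
Proof.
  intros HM HF Hgeom Hnum. apply is_lim_seq_of_bound with (C := 2 / delta ^ 2).
  intros n Hn. eapply Rle_trans; [apply (log_series_error a F num); auto|].
  pose proof delta_pos. assert (0 < INR n) by (apply lt_0_INR; lia).
  unfold Rdiv at 2 3. apply Rmult_le_compat_l; [apply Rdiv_le_0_compat; simpl; nra|].
  apply Rinv_le_contravar; auto. apply le_INR. nia.
Qed.

Lemma is_lim_seq_cosk_div_succ M : (0 < M)%nat -> cosk th M = 1 -> sink th M = 0 ->
  is_lim_seq (fun n => sum_lt (fun k => cosk th k / INR (S k)) (n * M)) (logser_re 1).
Proof.
  intros HM Hc Hs.
  replace (logser_re 1) with (logser_re 1 - logser_re 0) by (rewrite logser_re_0; ring).
  apply (log_series_limit _ _ (fun t => 1 - co * t)); auto.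
  - exact is_derive_logser_re.
  - intros n t. destruct (cosk_sink_mul th M Hc Hs n) as [Hc' Hs'].
    apply (geom_sum_cosk_sink_closed _ t Hc' Hs').
  - intros t Ht. pose proof (COS_bound th). fold co in H. apply Rabs_le. nra.
Qed.

Lemma is_lim_seq_sink_div_succ M : (0 < M)%nat -> cosk th M = 1 -> sink th M = 0 ->
  is_lim_seq (fun n => sum_lt (fun k => sink th k / INR (S k)) (n * M)) (logser_im 1).
Proof.
  intros HM Hc Hs.
  replace (logser_im 1) with (logser_im 1 - logser_im 0) by (rewrite logser_im_0; ring).
  apply (log_series_limit _ _ (fun t => si * t)); auto.
  - exact is_derive_logser_im.
  - intros n t. destruct (cosk_sink_mul th M Hc Hs n) as [Hc' Hs'].
    apply (geom_sum_cosk_sink_closed _ t Hc' Hs').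
  - intros t Ht. pose proof (SIN_bound th). fold si in H. rewrite Rabs_mult.
    rewrite (Rabs_pos_eq t) by lra. assert (Rabs si <= 1) by (apply Rabs_le; lra). nra.
Qed.

End LogSeries.

(** * The series [gamma] at roots of unity *)

Lemma is_lim_seq_sum_lt_blocks (g : nat -> R) M (l : R) : (0 < M)%nat ->
  is_lim_seq g 0 -> is_lim_seq (fun n => sum_lt g (n * M)) l -> is_lim_seq (sum_lt g) l.
Proof.
  intros HM Hg HG. apply is_lim_seq_spec. apply is_lim_seq_spec in Hg, HG. hnf in Hg, HG |- *.
  intros eps.
  assert (HMr : 0 < INR M) by (apply lt_0_INR; auto).
  assert (He : 0 < eps / (2 * INR M)) by (apply Rdiv_lt_0_compat; [apply cond_pos | lra]).
  destruct (Hg (mkposreal _ He)) as [N1 H1]. destruct (HG (pos_div_2 eps)) as [N2 H2].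
  exists ((N1 + N2) * M)%nat. intros K HK. simpl in H1, H2.
  set (n := (K / M)%nat). set (r := (K mod M)%nat).
  assert (HKnr : K = (n * M + r)%nat) by (rewrite Nat.mul_comm; apply Nat.div_mod; lia).
  assert (Hn : (N1 + N2 <= n)%nat) by (apply Nat.div_le_lower_bound; lia).
  assert (Hr : (r < M)%nat) by (apply Nat.mod_upper_bound; lia).
  assert (Htail : Rabs (sum_lt (fun k => g (n * M + k)%nat) r) <= INR r * (eps / (2 * INR M))).
  { apply Rabs_sum_lt_le. intros k Hk.
    specialize (H1 (n * M + k)%nat ltac:(nia)). rewrite Rminus_0_r in H1. lra. }
  assert (INR r * (eps / (2 * INR M)) <= eps / 2).
  { assert (INR r <= INR M) by (apply le_INR; lia).
    apply Rle_trans with (INR M * (eps / (2 * INR M))); [apply Rmult_le_compat_r; lra|].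
    right. field. lra. }
  specialize (H2 n ltac:(lia)).
  rewrite HKnr, sum_lt_add.
  replace (sum_lt g (n * M) + sum_lt (fun k => g (n * M + k)%nat) r - l)
    with ((sum_lt g (n * M) - l) + sum_lt (fun k => g (n * M + k)%nat) r) by ring.
  eapply Rle_lt_trans; [apply Rabs_triang|]. simpl. lra.
Qed.

Definition gamma_coeff (k : nat) : R := 1 / INR (S k) - ln_succ_ratio k.

Lemma gamma_coeff_bound k : Rabs (gamma_coeff k) <= 1 / INR (S k).
Proof. pose proof (ln_succ_ratio_bounds k). unfold gamma_coeff. apply Rabs_le. lra. Qed.

(* Blockwise, the [1 / (k + 1)] part converges by hypothesis and the
   [ln_succ_ratio] part by Gauss's formula; the terms tend to [0]. *)
Lemma is_lim_seq_sum_periodic_gamma_coeff M (c : nat -> R) B (L : R) : (0 < M)%nat ->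
  (forall k, c (k + M)%nat = c k) -> sum_lt c M = 0 -> (forall k, Rabs (c k) <= B) ->
  is_lim_seq (fun n => sum_lt (fun k => c k / INR (S k)) (n * M)) L ->
  is_lim_seq (sum_lt (fun k => c k * gamma_coeff k))
             (L + sum_lt (fun j => c j * lnGamma_step M j) M).
Proof.
  intros HM Hper Hsum Hb HL. apply is_lim_seq_sum_lt_blocks with M; auto.
  - apply is_lim_seq_of_bound with (C := B). intros n Hn.
    assert (0 < INR n) by (apply lt_0_INR; lia).
    rewrite Rminus_0_r, Rabs_mult.
    pose proof (Rle_trans _ _ _ (Rabs_pos (c 0%nat)) (Hb 0%nat)).
    apply Rle_trans with (B * (1 / INR (S n))).
    + apply Rmult_le_compat; auto using Rabs_pos, gamma_coeff_bound.
    + unfold Rdiv. rewrite Rmult_1_l. apply Rmult_le_compat_l; auto.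
      apply Rinv_le_contravar; [lra | rewrite S_INR; lra].
  - replace (L + sum_lt (fun j => c j * lnGamma_step M j) M)
      with (L - - sum_lt (fun j => c j * lnGamma_step M j) M) by ring.
    eapply is_lim_seq_ext; [| apply is_lim_seq_minus';
      [exact HL | apply (is_lim_seq_periodic_sum_ln_succ_ratio M c B); auto]].
    intros n. cbv beta. rewrite <- sum_lt_minus. apply sum_lt_ext. intros k _.
    unfold gamma_coeff. unfold Rdiv. ring.
Qed.

(* Both sides are minus the limit of the same sequence of block sums. *)
Lemma sum_lnGamma_step_double q (c : nat -> R) B : (0 < q)%nat ->
  (forall k, c (k + q)%nat = c k) -> sum_lt c q = 0 -> (forall k, Rabs (c k) <= B) ->
  sum_lt (fun j => c j * lnGamma_step q j) q
  = sum_lt (fun j => c j * lnGamma_step (2 * q) j) (2 * q).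
Proof.
  intros Hq Hper Hsum Hb.
  assert (Hper2 : forall k, c (k + 2 * q)%nat = c k)
    by (intros k; replace (k + 2 * q)%nat with (k + q + q)%nat by lia; rewrite !Hper; auto).
  assert (Hsum2 : sum_lt c (2 * q) = 0).
  { replace (2 * q)%nat with (q + q)%nat by lia. rewrite sum_lt_add.
    rewrite (sum_lt_ext (fun k => c (q + k)%nat) c)
      by (intros k _; rewrite Nat.add_comm; auto).
    rewrite Hsum. ring. }
  pose proof (is_lim_seq_periodic_sum_ln_succ_ratio q c B Hq Hper Hsum Hb) as L1.
  pose proof (is_lim_seq_periodic_sum_ln_succ_ratio (2 * q) c B ltac:(lia) Hper2 Hsum2 Hb) as L2.
  apply (is_lim_seq_subseq _ _ (fun n => (2 * n)%nat)) in L1;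
    [| apply eventually_subseq; intros; lia].
  apply (is_lim_seq_ext _ (fun n => sum_lt (fun k => c k * ln_succ_ratio k) (n * (2 * q)))) in L1;
    [| intros n; f_equal; lia].
  apply is_lim_seq_unique in L1, L2. rewrite L1 in L2. apply Rbar_finite_eq in L2. lra.
Qed.

Lemma sum_lt_antiperiodic_fold q (c f : nat -> R) : (forall k, c (k + q)%nat = - c k) ->
  sum_lt (fun j => c j * (f j - f (j + q)%nat)) q = sum_lt (fun j => c j * f j) (2 * q).
Proof.
  intros Hc. replace (2 * q)%nat with (q + q)%nat by lia. rewrite sum_lt_add.
  rewrite (sum_lt_ext (fun k => c (q + k)%nat * f (q + k)%nat)
                      (fun k => -1 * (c k * f (k + q)%nat)))
    by (intros k _; rewrite (Nat.add_comm q k), Hc; ring).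
  rewrite sum_lt_scal.
  rewrite (sum_lt_ext _ (fun j => c j * f j - c j * f (j + q)%nat)) by (intros; ring).
  rewrite sum_lt_minus. ring.
Qed.

Lemma pow_n_Cexp th k : pow_n (Cexp (0, th)) k = (cosk th k, sink th k).
Proof.
  induction k as [|k IH]; [rewrite cosk_0, sink_0; reflexivity|].
  simpl pow_n. rewrite IH, cosk_S, sink_S. unfold Cexp. simpl. rewrite exp_0.
  apply injective_projections; simpl; ring.
Qed.

Lemma gamma_term_Cexp th k :
  gamma_term (Cexp (0, th)) k = (cosk th k * gamma_coeff k, sink th k * gamma_coeff k).
Proof.
  unfold gamma_term. rewrite pow_n_Cexp. unfold Cmult, RtoC, gamma_coeff, ln_succ_ratio. simpl.
  apply injective_projections; simpl; ring.
Qed.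

Lemma sum_weighted_pow_Cexp th (e : nat -> R) N :
  sum_n_m (fun j => Cmult (pow_n (Cexp (0, th)) (j - 1)) (RtoC (e j))) 1 N =
  (sum_lt (fun j => cosk th j * e (S j)) N, sum_lt (fun j => sink th j * e (S j)) N).
Proof.
  rewrite sum_n_m_1_C. f_equal; apply sum_lt_ext; intros j _;
    rewrite Nat.sub_succ, Nat.sub_0_r, pow_n_Cexp; simpl; ring.
Qed.

Lemma is_series_of_sum_lt (a : nat -> C) (l : C) :
  is_lim_seq (sum_lt (fun k => fst (a k))) (fst l) ->
  is_lim_seq (sum_lt (fun k => snd (a k))) (snd l) -> is_series a l.
Proof.
  intros H1 H2. apply is_lim_seq_incr_1, is_lim_seq_spec in H1, H2.
  intros P [eps HP].
  destruct (H1 eps) as [K1 HK1]. destruct (H2 eps) as [K2 HK2].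
  exists (max K1 K2). intros K HK. apply HP. rewrite sum_n_C.
  split; unfold ball; simpl; unfold AbsRing_ball, abs, minus, plus, opp; simpl;
    [apply HK1 | apply HK2]; lia.
Qed.

Lemma ln_sqrt D : 0 < D -> ln (sqrt D) = ln D / 2.
Proof.
  intros HD. pose proof (sqrt_lt_R0 D HD).
  rewrite <- (sqrt_sqrt D) at 2 by lra. rewrite ln_mult by auto. field.
Qed.

Lemma Clog_div_Cexp th : cos th < 1 ->
  Cdiv (Clog (Cminus 1 (Cexp (0, th)))) (Cexp (0, th)) = (- logser_re th 1, - logser_im th 1).
Proof.
  intros Hc. pose proof (cos2_sin2_th th) as H.
  unfold Cexp, Cdiv, Clog, Cminus, Cplus, Copp, Cmod, Cmult, Cinv, Arg, logser_re, logser_im, den.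
  simpl. rewrite exp_0, !Rmult_1_l.
  destruct (Rlt_dec 0 (1 + - cos th)) as [Hp|Hp]; [|lra].
  replace (cos th * (cos th * 1) + sin th * (sin th * 1)) with 1 by nra.
  set (D := (1 + - cos th) * ((1 + - cos th) * 1) + (0 + - sin th) * ((0 + - sin th) * 1)).
  assert (HD : 0 < D) by (unfold D; nra).
  replace ((1 - cos th * 1) * ((1 - cos th * 1) * 1) + sin th * 1 * (sin th * 1 * 1)) with D
    by (unfold D; ring).
  rewrite ln_sqrt by lra.
  replace (- sin th * 1 / (1 - cos th * 1)) with ((0 + - sin th) / (1 + - cos th)) by (field; lra).
  f_equal; field.
Qed.

Lemma is_series_gamma_term th M : (0 < M)%nat -> cos th < 1 ->
  cosk th M = 1 -> sink th M = 0 ->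
  is_series (gamma_term (Cexp (0, th)))
    (Cminus (sum_lt (fun j => cosk th j * lnGamma_step M j) M,
             sum_lt (fun j => sink th j * lnGamma_step M j) M)
            (Cdiv (Clog (Cminus 1 (Cexp (0, th)))) (Cexp (0, th)))).
Proof.
  intros HM Hco Hc Hs. rewrite Clog_div_Cexp by auto.
  destruct (sum_cosk_sink_period th Hco M Hc Hs) as [Zc Zs].
  apply is_series_of_sum_lt.
  - apply (is_lim_seq_ext (sum_lt (fun k => cosk th k * gamma_coeff k))).
    { intros n. apply sum_lt_ext. intros k _. rewrite gamma_term_Cexp. reflexivity. }
    simpl. rewrite Ropp_involutive, Rplus_comm.
    apply (is_lim_seq_sum_periodic_gamma_coeff M (cosk th) 1); auto.
    + intros k. rewrite (proj1 (cosk_sink_add th M 1 Hc Hs k)). ring.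
    + intros k. apply Rabs_le, COS_bound.
    + apply is_lim_seq_cosk_div_succ; auto.
  - apply (is_lim_seq_ext (sum_lt (fun k => sink th k * gamma_coeff k))).
    { intros n. apply sum_lt_ext. intros k _. rewrite gamma_term_Cexp. reflexivity. }
    simpl. rewrite Ropp_involutive, Rplus_comm.
    apply (is_lim_seq_sum_periodic_gamma_coeff M (sink th) 1); auto.
    + intros k. rewrite (proj2 (cosk_sink_add th M 1 Hc Hs k)). ring.
    + intros k. apply Rabs_le, SIN_bound.
    + apply is_lim_seq_sink_div_succ; auto.
Qed.

Lemma cos_lt_1_of_Cexp_neq_1 th : Cexp (0, th) <> RtoC 1 -> cos th < 1.
Proof.
  intros Hw. destruct (COS_bound th) as [_ [Hc|Hc]]; auto. exfalso. apply Hw.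
  pose proof (sin2_cos2 th) as H. rewrite Hc in H. unfold Rsqr in H.
  assert (Hs : sin th = 0) by nra.
  unfold Cexp, RtoC. simpl. rewrite exp_0, Hc, Hs. f_equal; ring.
Qed.

Lemma cos_sin_INR_mul_PI m :
  cos (INR m * PI) = (if Nat.even m then 1 else -1) /\ sin (INR m * PI) = 0.
Proof.
  destruct (Nat.Even_or_Odd m) as [[r ->] | [r ->]].
  - rewrite Nat.even_even.
    replace (INR (2 * r) * PI) with (0 + 2 * INR r * PI) by (rewrite mult_INR; simpl; ring).
    rewrite cos_period, sin_period, cos_0, sin_0. auto.
  - rewrite Nat.even_odd.
    replace (INR (2 * r + 1) * PI) with ((0 + 2 * INR r * PI) + PI)
      by (rewrite plus_INR, mult_INR; change (INR 2) with 2; change (INR 1) with 1; ring).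
    rewrite neg_cos, neg_sin, cos_period, sin_period, cos_0, sin_0. split; ring.
Qed.

Lemma ln_Gamma_ratio_step M j : (0 < M)%nat ->
  ln (Gamma (INR (S j + 1) / INR M) / Gamma (INR (S j) / INR M)) = lnGamma_step M j.
Proof.
  intros HM. replace (S j + 1)%nat with (S (S j)) by lia.
  apply lnGamma_ratio; apply Rdiv_lt_0_compat; apply lt_0_INR; lia.
Qed.

Lemma E_jpq_even j p q : (0 < q)%nat -> Nat.even p = true ->
  E_jpq (S j) p q = lnGamma_step q j.
Proof. intros Hq Hp. unfold E_jpq. rewrite Hp. apply ln_Gamma_ratio_step; auto. Qed.

Lemma E_jpq_odd j p q : (0 < q)%nat -> Nat.even p = false ->
  E_jpq (S j) p q = lnGamma_step (2 * q) j - lnGamma_step (2 * q) (j + q).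
Proof.
  intros Hq Hp. unfold E_jpq, lnGamma_step. rewrite Hp.
  replace (S j + 1)%nat with (S (S j)) by lia.
  replace (S j + q + 1)%nat with (S (S (j + q))) by lia.
  replace (S j + q)%nat with (S (j + q)) by lia.
  assert (Hpos : forall m, 0 < INR (S m) / INR (2 * q)) by
    (intros; apply Rdiv_lt_0_compat; apply lt_0_INR; lia).
  pose proof (Gamma_pos _ (Hpos (S j))). pose proof (Gamma_pos _ (Hpos (j + q)%nat)).
  pose proof (Gamma_pos _ (Hpos j)). pose proof (Gamma_pos _ (Hpos (S (j + q)))).
  unfold lnGamma. rewrite ln_div, !ln_mult by (try apply Rmult_lt_0_compat; auto). ring.
Qed.

Lemma sum_E_jpq (c : nat -> R) p q B : (0 < q)%nat -> (forall k, Rabs (c k) <= B) ->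
  (forall k, c (k + q)%nat = (if Nat.even p then 1 else -1) * c k) ->
  (Nat.even p = true -> sum_lt c q = 0) ->
  sum_lt (fun j => c j * E_jpq (S j) p q) q
  = sum_lt (fun j => c j * lnGamma_step (2 * q) j) (2 * q).
Proof.
  intros Hq Hb Hc Hsum. destruct (Nat.even p) eqn:Hp.
  - rewrite (sum_lt_ext _ (fun j => c j * lnGamma_step q j))
      by (intros; rewrite E_jpq_even; auto).
    apply (sum_lnGamma_step_double q c B); auto.
    intros k. rewrite Hc. ring.
  - rewrite (sum_lt_ext _ (fun j => c j * (lnGamma_step (2 * q) j
                                            - lnGamma_step (2 * q) (j + q)%nat)))
      by (intros; rewrite E_jpq_odd; auto).
    apply sum_lt_antiperiodic_fold. intros k. rewrite Hc. ring.
Qed.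

Lemma cosk_sink_PI_div p q m : (0 < q)%nat ->
  cosk (PI * INR p / INR q) (m * q) = (if Nat.even (m * p) then 1 else -1) /\
  sink (PI * INR p / INR q) (m * q) = 0.
Proof.
  intros Hq. unfold cosk, sink.
  replace (INR (m * q) * (PI * INR p / INR q)) with (INR (m * p) * PI)
    by (rewrite !mult_INR; field; apply not_0_INR; lia).
  apply cos_sin_INR_mul_PI.
Qed.

Lemma sum_weighted_lnGamma_ratio th M : (0 < M)%nat ->
  sum_n_m (fun j => Cmult (pow_n (Cexp (0, th)) (j - 1))
             (RtoC (ln (Gamma (INR (j + 1) / INR M) / Gamma (INR j / INR M))))) 1 M =
  (sum_lt (fun j => cosk th j * lnGamma_step M j) M,
   sum_lt (fun j => sink th j * lnGamma_step M j) M).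
Proof.
  intros HM. rewrite sum_weighted_pow_Cexp.
  f_equal; apply sum_lt_ext; intros; rewrite ln_Gamma_ratio_step by auto; reflexivity.
Qed.

Lemma sum_weighted_E_jpq p q th : (0 < q)%nat -> cos th < 1 ->
  cosk th q = (if Nat.even p then 1 else -1) -> sink th q = 0 ->
  sum_n_m (fun j => Cmult (pow_n (Cexp (0, th)) (j - 1)) (RtoC (E_jpq j p q))) 1 q =
  (sum_lt (fun j => cosk th j * lnGamma_step (2 * q) j) (2 * q),
   sum_lt (fun j => sink th j * lnGamma_step (2 * q) j) (2 * q)).
Proof.
  intros Hq Hco Hc Hs. rewrite sum_weighted_pow_Cexp.
  pose proof (cosk_sink_add th q _ Hc Hs) as Hadd.
  assert (Hsum : Nat.even p = true -> sum_lt (cosk th) q = 0 /\ sum_lt (sink th) q = 0)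
    by (intros Hp; rewrite Hp in Hc; apply (sum_cosk_sink_period th Hco); auto).
  f_equal; apply (sum_E_jpq _ p q 1); auto; intros.
  - apply Rabs_le, COS_bound.
  - apply Hadd.
  - apply Hsum; auto.
  - apply Rabs_le, SIN_bound.
  - apply Hadd.
  - apply Hsum; auto.
Qed.

Theorem theorem29 (p q : nat) (hp : (0 < p)%nat) (hq : (0 < q)%nat)
  (hpq : Nat.gcd p q = 1%nat)
  (hw : Cexp (0, PI * INR p / INR q) <> RtoC 1) :
  let w := Cexp (0, PI * INR p / INR q) in
  let S1 := sum_n_m (fun j => Cmult (pow_n w (j - 1)) (RtoC (E_jpq j p q))) 1 q in
  let S2 := sum_n_m (fun j => Cmult (pow_n w (j - 1))
              (RtoC (ln (Gamma (INR (j + 1) / INR (2 * q)) / Gamma (INR j / INR (2 * q))))))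
              1 (2 * q) in
  is_series (gamma_term w) (Cminus S1 (Cdiv (Clog (Cminus 1 w)) w)) /\ S1 = S2.
Proof.
  intros w S1 S2.
  destruct (cosk_sink_PI_div p q 1 hq) as [Hc Hs].
  rewrite !Nat.mul_1_l in Hc. rewrite Nat.mul_1_l in Hs.
  destruct (cosk_sink_PI_div p q 2 hq) as [Hc2 Hs2]. rewrite Nat.even_even in Hc2.
  set (th := PI * INR p / INR q) in *.
  pose proof (cos_lt_1_of_Cexp_neq_1 th hw) as Hco.
  assert (E1 : S1 = (sum_lt (fun j => cosk th j * lnGamma_step (2 * q) j) (2 * q),
                     sum_lt (fun j => sink th j * lnGamma_step (2 * q) j) (2 * q)))
    by (unfold S1, w; apply sum_weighted_E_jpq; auto).
  assert (E2 : S2 = (sum_lt (fun j => cosk th j * lnGamma_step (2 * q) j) (2 * q),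
                     sum_lt (fun j => sink th j * lnGamma_step (2 * q) j) (2 * q)))
    by (unfold S2, w; apply sum_weighted_lnGamma_ratio; lia).
  split; [rewrite E1; apply is_series_gamma_term; auto; lia | congruence].
Qed.
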